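(* For any $\alpha\in(0,1/2)$ and any (possibly $K$-dependent) integer $t$ with $0\le t\le K^{1+\alpha}$, \[ \frac{C_t-\widetilde C_t}{K}\to0\quad\text{in probability as }K\to\infty. \]
   Context: Incremental construction. Fix an integer $K\ge2$, $[n]=\{1,\dots,n\}$. A random $K\times K$ matrix $\Psi$ is filled with $1,\dots,K^2$, the integer $s$ placed at step $s$. After step $t$, $R_t$, $C_t$ are the numbers of nonempty rows and columns (nonempty rows are $1,\dots,R_t$, nonempty columns $1,\dots,C_t$), and $M_t$ is the submatrix with rows $[R_t]$, columns $[C_t]$; $R_0=C_0=0$. Step 1: $\Psi(1,1)=1$ ($R_1=C_1=1$), counted as creating a new row and a new column. For $t=1,\dots,K^2-1$, step $t+1$: with conditional probability $\rho_{t+1}=\frac{(K-R_t)K}{K^2-t}$ a new row is created ($R_{t+1}=R_t+1$), and independently with probability $\frac{K-C_t}{K}$ also a new column ($C_{t+1}=C_t+1$, $\Psi(R_{t+1},C_{t+1})=t+1$), otherwise $C_{t+1}=C_t$ and $\Psi(R_{t+1},Z)=t+1$ with $Z$ uniform in $[C_t]$. With probability $1-\rho_{t+1}$, no new row is created ($R_{t+1}=R_t$) and a uniformly random empty cell $(X,Y)$ among rows $[R_t]$ is chosen by rejection sampling: cells are drawn independently and uniformly among the $R_tK$ cells of rows $[R_t]$ until an empty one is drawn; $U_{t+1}=1$ if the first draw is empty, $U_{t+1}=0$ otherwise. If $Y>C_t$ then $C_{t+1}=C_t+1$ and $\Psi(X,C_{t+1})=t+1$; otherwise $C_{t+1}=C_t$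 and $\Psi(X,Y)=t+1$. Define $\widetilde C_0=0$ and, for $s\ge1$: $\widetilde C_s-\widetilde C_{s-1}=C_s-C_{s-1}$, except at steps $s$ where no new row is created and $U_s=0$, where $\widetilde C_s=\widetilde C_{s-1}$. *)

From HB Require Import structures.
From mathcomp Require Import all_boot all_order all_algebra.
From mathcomp Require Import all_classical all_reals all_analysis.
Set Implicit Arguments. Unset Strict Implicit. Unset Printing Implicit Defensive.
Import Order.TTheory GRing.Theory Num.Theory.
Local Open Scope ring_scope.

(* Finitely supported (sub)probability distributions as weighted lists. *)
Definition dist (R : realType) (T : Type) := seq (R * T).

Definition dret (R : realType) (T : Type) (x : T) : dist R T := [:: (1, x)].

Definition dbind (R : realType) (A B : Type) (d : dist R A) (f : A -> dist R B)
  : dist R B :=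
  flatten [seq [seq (px.1 * qy.1, qy.2) | qy <- f px.2] | px <- d].

Definition dbern (R : realType) (p : R) : dist R bool := [:: (p, true); (1 - p, false)].

Definition dunif (R : realType) (T : Type) (l : seq T) : dist R T :=
  [seq ((size l)%:R^-1, x) | x <- l].

Definition prob (R : realType) (T : Type) (d : dist R T) (P : T -> bool) : R :=
  \sum_(px <- d | P px.2) px.1.

(* State of the construction after some step.  Indices are 0-based:
   paper row i / column j  <->  index i-1 / j-1.  Psi i j = 0 means empty. *)
Record state := mkState {
  Psi : nat -> nat -> nat;   (* the partially filled K x K matrix *)
  Rr  : nat;
  Cc  : nat;                 (* C_t *)
  Ct  : nat                  (* \widetilde C_t *)
}.

Definition setPsi (P : nat -> nat -> nat) (i j v : nat) : nat -> nat -> nat :=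
  fun a b => if (a == i) && (b == j) then v else P a b.

Definition state0 : state := mkState (fun _ _ => 0%N) 0 0 0.
Definition state1 : state := mkState (setPsi (fun _ _ => 0%N) 0 0 1) 1 1 1.

(* Step t+1 (t >= 1), from the state x after step t. *)
Definition step (R : realType) (K t : nat) (x : state) : dist R state :=
  let s := t.+1 in
  let P := Psi x in let r := Rr x in let c := Cc x in let ct := Ct x in
  let rho : R := ((K - r) * K)%N%:R / (K * K - t)%N%:R in
  dbind (dbern rho) (fun newrow =>
  if newrow then
    dbind (dbern ((K - c)%N%:R / K%:R)) (fun newcol =>
      if newcol then dret R (mkState (setPsi P r c s) r.+1 c.+1 ct.+1)
      else dbind (dunif R (iota 0 c)) (fun z =>
             dret R (mkState (setPsi P r z s) r.+1 c ct)))
  else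
    (* rejection sampling among the r*K cells of rows [r]: the first draw
       decides U; the accepted cell is uniform among the empty cells *)
    let cells := [seq (i, j) | i <- iota 0 r, j <- iota 0 K] in
    let empty (ij : nat * nat) := P ij.1 ij.2 == 0%N in
    dbind (dunif R cells) (fun first =>
      let U := empty first in
      dbind (if U then dret R first else dunif R (seq.filter empty cells)) (fun XY =>
        let X := XY.1 in let Y := XY.2 in
        if (c <= Y)%N then (* Y > C_t in 1-based indexing: new column C_t+1 *)
          dret R (mkState (setPsi P X c s) r c.+1 (if U then ct.+1 else ct))
        else dret R (mkState (setPsi P X Y s) r c ct)))).

Fixpoint law (R : realType) (K t : nat) : dist R state :=
  match t with
  | 0 => dret R state0
  | 1 => dret R state1
  | t'.+1 => dbind (law R K t') (step R K t')
  end.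

From HB Require Import structures.
From mathcomp Require Import all_boot all_order all_algebra.
From mathcomp Require Import all_classical all_reals all_analysis.
From mathcomp Require Import lra zify ring.
Import Order.TTheory GRing.Theory Num.Theory numFieldNormedType.Exports.
Set Implicit Arguments. Unset Strict Implicit. Unset Printing Implicit Defensive.
Local Open Scope classical_set_scope.
Local Open Scope ring_scope.

(* The gap |C_t - C~_t| moves only at a step where no row is created, the first
   rejection-sampling draw hits a filled cell (U = 0) and a new column is opened,
   and then it grows by one.  The first draw is uniform over the R_t K cells of the
   rows in use, at most t of which are filled, and no row is created with
   probability 1 - rho_{t+1} <= R_t K / (K^2 - t); hence the expected gap grows by
   at most t / (K^2 - t) per step and E|C_t - C~_t| <= t^2 / (K^2 - t).  For
   t <= K^(1+alpha) this is O(K^(2 alpha)) = o(K) because alpha < 1/2, and Markov's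
   inequality concludes. *)

Section Distributions.
Variable R : realType.

Definition expect (T : Type) (d : dist R T) (f : T -> R) : R :=
  \sum_(p <- d) p.1 * f p.2.

Definition mass (T : Type) (d : dist R T) : R := expect d (fun _ => 1).

(* Atoms of weight zero are exempt: the no-new-row branch of [step] has weight
   zero when R_t K = t, i.e. when the rows in use have no empty cell. *)
Definition dall (T : Type) (P : T -> Prop) (d : dist R T) : Prop :=
  forall p, List.In p d -> 0 <= p.1 /\ (p.1 != 0 -> P p.2).

(* Only [mass d <= 1]: [dunif] of an empty list has mass 0. *)
Definition subdist (T : Type) (P : T -> Prop) (d : dist R T) : Prop :=
  dall P d /\ mass d <= 1.

Lemma expect_dret (T : Type) (x : T) f : expect (dret R x) f = f x.
Proof. by rewrite /expect big_cons big_nil mul1r addr0. Qed.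

Lemma expect_dbern (p : R) f :
  expect (dbern p) f = p * f true + (1 - p) * f false.
Proof. by rewrite /expect !big_cons big_nil addr0. Qed.

Lemma expect_dunif (T : Type) (l : seq T) f :
  expect (dunif R l) f = (size l)%:R^-1 * \sum_(a <- l) f a.
Proof. by rewrite /expect big_map big_distrr. Qed.

Lemma expect_dbind (A B : Type) (d : dist R A) (g : A -> dist R B) f :
  expect (dbind d g) f = expect d (fun a => expect (g a) f).
Proof.
rewrite /expect /dbind big_flatten big_map; apply: eq_bigr => p _.
by rewrite big_map big_distrr /=; apply: eq_bigr => q _; rewrite mulrA.
Qed.

Lemma expectDr (T : Type) (d : dist R T) f k :
  expect d (fun x => f x + k) = expect d f + mass d * k.
Proof.
rewrite /mass /expect big_distrl -big_split.
by apply: eq_bigr => p _; rewrite /= mulrDr mulr1.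
Qed.

Lemma expectMr (T : Type) (d : dist R T) f k :
  expect d (fun x => f x * k) = expect d f * k.
Proof. by rewrite /expect big_distrl; apply: eq_bigr => p _; rewrite mulrA. Qed.

Lemma prob_expect (T : Type) (d : dist R T) (P : pred T) :
  prob d P = expect d (fun x => (P x)%:R).
Proof.
rewrite /prob /expect big_mkcond; apply: eq_bigr => p _.
by case: (P p.2); rewrite ?mulr1 ?mulr0.
Qed.

Lemma ler_expect (T : Type) (P : T -> Prop) (d : dist R T) f h :
  dall P d -> (forall x, P x -> f x <= h x) -> expect d f <= expect d h.
Proof.
move=> dP fh; elim: d dP => [|p d IH] dP; first by rewrite /expect !big_nil.
rewrite /expect !big_cons; apply: lerD; last by apply: IH => q dq; apply: dP; right.
have [p_ge0 Pp] := dP p (or_introl erefl).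
have [->|p_neq0] := eqVneq p.1 0; first by rewrite !mul0r.
by rewrite ler_wpM2l //; apply/fh/Pp.
Qed.

Lemma expect_le (T : Type) (P : T -> Prop) (d : dist R T) f a :
  subdist P d -> 0 <= a -> (forall x, P x -> f x <= a) -> expect d f <= a.
Proof.
move=> [dP mass_le1] a_ge0 fa; apply: le_trans (ler_expect dP fa) _.
have -> : expect d (fun _ => a) = mass d * a.
  by rewrite /mass -expectMr; congr expect; apply: funext => x; rewrite mul1r.
by rewrite ler_piMl.
Qed.

Lemma expect_dbind_le (A B : Type) (P : A -> Prop) (d : dist R A)
    (g : A -> dist R B) f a :
  subdist P d -> 0 <= a -> (forall y, P y -> expect (g y) f <= a) ->
  expect (dbind d g) f <= a.
Proof. by move=> dP a_ge0 ga; rewrite expect_dbind; apply: expect_le dP a_ge0 ga. Qed.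

Lemma prob_ge0 (T : Type) (P : T -> Prop) (d : dist R T) (Q : pred T) :
  dall P d -> 0 <= prob d Q.
Proof.
move=> dP; rewrite prob_expect -[leLHS](mulr0 (mass d)) -expectMr.
by apply: ler_expect dP _ => x _; rewrite mul1r.
Qed.

Lemma prob_lt_le_expect (T : Type) (P : T -> Prop) (d : dist R T) f c :
  dall P d -> (forall x, 0 <= f x) -> 0 < c ->
  prob d (fun x => c < f x) <= expect d f / c.
Proof.
move=> dP f_ge0 c_gt0; rewrite prob_expect -expectMr.
apply: ler_expect dP _ => x _; case: ltP => [cf|_] /=.
- by rewrite ler_pdivlMr // mul1r ltW.
- by rewrite divr_ge0 // ltW.
Qed.

Lemma in_dbind (A B : Type) (d : dist R A) (g : A -> dist R B) q :
  List.In q (dbind d g) ->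
  exists2 p, List.In p d & exists2 r, List.In r (g p.2) & q = (p.1 * r.1, r.2).
Proof.
elim: d => [|p d IH] //= /(List.in_app_or _ _ q)[|/IH[p' dp' gp']].
- by case/List.in_map_iff=> r [<- gr]; exists p; [left | exists r].
- by exists p'; [right|].
Qed.

Lemma sub_subdist (T : Type) (P Q : T -> Prop) (d : dist R T) :
  (forall x, P x -> Q x) -> subdist P d -> subdist Q d.
Proof. by move=> PQ [dP mass_le1]; split=> // p /dP[p_ge0 Pp]; split=> // /Pp/PQ. Qed.

Lemma subdist_dret (T : Type) (P : T -> Prop) x : P x -> subdist P (dret R x).
Proof.
move=> Px; split; last by rewrite /mass expect_dret.
by move=> p [<-|[]] /=; split=> //; lra.
Qed.

Lemma subdist_dbern (P : bool -> Prop) (p : R) :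
  0 <= p <= 1 -> (p != 0 -> P true) -> (1 - p != 0 -> P false) ->
  subdist P (dbern p).
Proof.
move=> /andP[p_ge0 p_le1] Pt Pf; split; last by rewrite /mass expect_dbern; lra.
by move=> q [<-|[<-|[]]] /=; split=> //; lra.
Qed.

Lemma subdist_dunif (T : Type) (P : T -> Prop) (l : seq T) :
  (forall a, List.In a l -> P a) -> subdist P (dunif R l).
Proof.
move=> lP; split.
  move=> q /List.in_map_iff[a [<- la]] /=; split; first by rewrite invr_ge0.
  by move=> _; apply: lP.
rewrite /mass expect_dunif big_const_seq count_predT iter_addr_0 -mulr_natl mulr1.
have [->|l_neq0] := eqVneq (size l) 0%N; first by rewrite invr0 mul0r.
by rewrite mulVf // pnatr_eq0.
Qed.

Lemma subdist_dbind (A B : Type) (P : B -> Prop) (d : dist R A)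
    (g : A -> dist R B) :
  subdist (fun a => subdist P (g a)) d -> subdist P (dbind d g).
Proof.
move=> [dg mass_d]; split.
  move=> q /in_dbind[p dp [r gr ->]] /=.
  have [p_ge0 gp] := dg p dp.
  have [->|p_neq0] := eqVneq p.1 0; first by rewrite mul0r eqxx.
  have [/(_ r gr)[r_ge0 Pr] _] := gp p_neq0.
  split; first exact: mulr_ge0.
  by rewrite mulf_eq0 negb_or => /andP[_ /Pr].
rewrite /mass expect_dbind; apply: le_trans mass_d.
by apply: ler_expect dg _ => a [].
Qed.

End Distributions.

Section Construction.
Variable R : realType.

Definition gap (x : state) : R := `|(Cc x)%:R - (Ct x)%:R|.

Lemma dist_natSS (m n : nat) : `|m.+1%:R - n.+1%:R| = `|m%:R - n%:R| :> R.
Proof. by rewrite -!natr1 opprD addrACA subrr addr0. Qed.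

Lemma dist_natSl (m n : nat) : `|m.+1%:R - n%:R| <= `|m%:R - n%:R| + 1 :> R.
Proof. by rewrite -natr1 addrAC; apply: le_trans (ler_normD _ _) _; rewrite normr1. Qed.

Lemma ratio_nat_ge0_le1 (m n : nat) : (m <= n)%N -> 0 <= (m%:R / n%:R : R) <= 1.
Proof.
move=> mn; rewrite divr_ge0 //=; have [n0|n_gt0] := posnP n.
  by rewrite n0 invr0 mulr0.
by rewrite ler_pdivrMr ?ltr0n // mul1r ler_nat.
Qed.

Definition cells (r K : nat) : seq (nat * nat) :=
  [seq (i, j) | i <- iota 0 r, j <- iota 0 K].

Lemma size_cells r K : size (cells r K) = (r * K)%N.
Proof. by rewrite size_allpairs !size_iota. Qed.

Lemma uniq_cells r K : uniq (cells r K).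
Proof. by rewrite allpairs_uniq ?iota_uniq // => -[a b] [c d]. Qed.

Definition filled (K : nat) (x : state) (r : nat) : nat :=
  count (fun ij : nat * nat => Psi x ij.1 ij.2 != 0%N) (cells r K).

Lemma filled_setPsi K x i j v r c ct B :
  (filled K (mkState (setPsi (Psi x) i j v) r c ct) B <= filled K x B + 1)%N.
Proof.
set old := fun ij : nat * nat => Psi x ij.1 ij.2 != 0%N.
apply: (@leq_trans (count (predU old (pred1 (i, j))) (cells B K))).
  apply: sub_count => -[a b]; rewrite /= /setPsi xpair_eqE.
  by case: (_ && _); rewrite ?orbT ?orbF.
have := count_predUI old (pred1 (i, j)) (cells B K).
have := count_uniq_mem (i, j) (uniq_cells B K).
rewrite /filled -/old; case: (_ \in _) => /=; lia.
Qed.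

Definition consistent (K t : nat) (x : state) : Prop :=
  (t <= Rr x * K)%N /\ forall r, (filled K x r <= t)%N.

Lemma consistent_setPsi K t x i j v r c ct :
  consistent K t x -> (t < r * K)%N ->
  consistent K t.+1 (mkState (setPsi (Psi x) i j v) r c ct).
Proof.
move=> [_ filled_le] trK; split=> // B.
by rewrite (leq_trans (filled_setPsi _ _ _ _ _ _ _ _ _)) // addn1 ltnS.
Qed.

Lemma consistent_state0 K : consistent K 0 state0.
Proof. by split=> // B; rewrite /filled; elim: (cells B K). Qed.

Lemma consistent_state1 K : (0 < K)%N -> consistent K 1 state1.
Proof.
move=> K_gt0; split=> [|B]; first by rewrite mul1n.
apply: leq_trans (filled_setPsi K state0 0 0 1 1 1 1 B) _.
by have [_ /(_ B)] := consistent_state0 K; rewrite leqn0 => /eqP ->.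
Qed.

Definition row_prob (K t r : nat) : R := ((K - r) * K)%N%:R / (K * K - t)%N%:R.

Definition new_row_step (K t : nat) (x : state) : dist R state :=
  dbind (dbern ((K - Cc x)%N%:R / K%:R)) (fun newcol =>
    if newcol then
      dret R (mkState (setPsi (Psi x) (Rr x) (Cc x) t.+1) (Rr x).+1 (Cc x).+1 (Ct x).+1)
    else dbind (dunif R (iota 0 (Cc x))) (fun z =>
      dret R (mkState (setPsi (Psi x) (Rr x) z t.+1) (Rr x).+1 (Cc x) (Ct x)))).

Definition old_row_step (K t : nat) (x : state) : dist R state :=
  dbind (dunif R (cells (Rr x) K)) (fun first =>
    let U := Psi x first.1 first.2 == 0%N in
    dbind (if U then dret R first
           else dunif R [seq ij <- cells (Rr x) K | Psi x ij.1 ij.2 == 0%N])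
      (fun XY => if (Cc x <= XY.2)%N then
          dret R (mkState (setPsi (Psi x) XY.1 (Cc x) t.+1) (Rr x) (Cc x).+1
                    (if U then (Ct x).+1 else Ct x))
        else dret R (mkState (setPsi (Psi x) XY.1 XY.2 t.+1) (Rr x) (Cc x) (Ct x)))).

Lemma stepE K t x :
  step R K t x = dbind (dbern (row_prob K t (Rr x)))
    (fun newrow => if newrow then new_row_step K t x else old_row_step K t x).
Proof. by []. Qed.

Lemma row_prob_ge0_le1 K t r :
  (t <= r * K)%N -> (t < K * K)%N -> 0 <= row_prob K t r <= 1.
Proof. by move=> trK tKK; apply: ratio_nat_ge0_le1; rewrite mulnBl; lia. Qed.

Lemma row_prob_neq1 K t r : (t <= r * K)%N -> (t < K * K)%N ->
  1 - row_prob K t r != 0 -> (t < r * K)%N.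
Proof.
move=> trK tKK; rewrite ltn_neqAle trK andbT; apply: contra => /eqP t_eq.
rewrite /row_prob (_ : ((K - r) * K)%N = (K * K - t)%N); last by rewrite t_eq mulnBl.
by rewrite divff ?subrr // pnatr_eq0 -lt0n subn_gt0.
Qed.

Lemma old_row_weight_le K t r : (0 < t)%N -> (t <= r * K)%N -> (t < K * K)%N ->
  (1 - row_prob K t r) * (t%:R / (r * K)%:R) <= t%:R / (K * K - t)%N%:R.
Proof.
move=> t_gt0 trK tKK.
have d_gt0 : 0 < (K * K - t)%N%:R :> R by rewrite ltr0n subn_gt0.
have u_gt0 : 0 < (r * K)%:R :> R by rewrite ltr0n; lia.
have : 1 - row_prob K t r <= (r * K)%:R / (K * K - t)%N%:R.
  rewrite ler_pdivlMr // mulrBl mul1r /row_prob divfK ?gt_eqF //.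
  by rewrite lerBlDr -natrD ler_nat mulnBl; lia.
have w_ge0 : 0 <= t%:R / (r * K)%:R :> R by rewrite divr_ge0.
move/(ler_wpM2r w_ge0)/le_trans; apply.
by rewrite mulrC mulrA divfK ?gt_eqF.
Qed.

Lemma subdist_new_row_step K t x : consistent K t x -> (t < K * K)%N ->
  subdist (consistent K t.+1) (new_row_step K t x).
Proof.
move=> xc tKK; have [trK _] := xc.
have next : (t < (Rr x).+1 * K)%N by rewrite mulSn; nia.
apply: subdist_dbind; apply: subdist_dbern => [||_].
- exact/ratio_nat_ge0_le1/leq_subr.
- by move=> _; apply/subdist_dret/consistent_setPsi.
- apply: subdist_dbind; apply: subdist_dunif => z _.
  by apply/subdist_dret/consistent_setPsi.
Qed.

Lemma subdist_old_row_step K t x : consistent K t x -> (t < Rr x * K)%N ->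
  subdist (consistent K t.+1) (old_row_step K t x).
Proof.
move=> xc trK; apply: subdist_dbind; apply: subdist_dunif => first _ /=.
apply: subdist_dbind; apply: (@sub_subdist _ _ (fun _ => True)) => [XY _|].
  by case: ifP => _; apply/subdist_dret/consistent_setPsi.
by case: ifP => _; [apply: subdist_dret | apply: subdist_dunif].
Qed.

Lemma subdist_step K t x : consistent K t x -> (t < K * K)%N ->
  subdist (consistent K t.+1) (step R K t x).
Proof.
move=> xc tKK; have [trK _] := xc.
rewrite stepE; apply: subdist_dbind; apply: subdist_dbern => [||/row_prob_neq1 old].
- exact: row_prob_ge0_le1.
- by move=> _; apply: subdist_new_row_step.
- exact/subdist_old_row_step/old.
Qed.

Lemma expect_gap_new_row K t x : expect (new_row_step K t x) gap <= gap x.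
Proof.
have coin : subdist (fun _ => True) (dbern ((K - Cc x)%N%:R / K%:R : R)).
  by apply: subdist_dbern => //; exact/ratio_nat_ge0_le1/leq_subr.
apply: expect_dbind_le coin (normr_ge0 _) _ => -[] _.
  by rewrite expect_dret /gap /= dist_natSS.
apply: (@expect_dbind_le _ _ _ (fun _ => True)) => [||z _].
- exact: subdist_dunif.
- exact: normr_ge0.
- by rewrite expect_dret.
Qed.

Lemma expect_gap_old_row K t x : consistent K t x -> (0 < t)%N ->
  expect (old_row_step K t x) gap <= gap x + t%:R / (Rr x * K)%:R.
Proof.
move=> [trK filled_le] t_gt0.
have u_gt0 : 0 < (Rr x * K)%:R :> R by rewrite ltr0n; lia.
rewrite expect_dbind expect_dunif size_cells.
apply: (@le_trans _ _ ((Rr x * K)%:R^-1 *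
  \sum_(ij <- cells (Rr x) K) (gap x + (Psi x ij.1 ij.2 != 0%N)%:R))).
  rewrite ler_wpM2l ?invr_ge0 //; apply: ler_sum => -[i j] _ /=.
  case: eqP => [empty|nonempty] /=.
  + rewrite expect_dbind expect_dret mulr0n addr0.
    by case: ifP => _; rewrite expect_dret /gap /= ?dist_natSS.
  + apply: (@expect_dbind_le _ _ _ (fun _ => True)) => [||XY _].
    * exact: subdist_dunif.
    * by rewrite addr_ge0 ?normr_ge0.
    * case: ifP => _; rewrite expect_dret /gap /= mulr1n; first exact: dist_natSl.
      by rewrite lerDl.
rewrite big_split /= big_const_seq count_predT iter_addr_0 size_cells.
have -> : \sum_(ij <- cells (Rr x) K) ((Psi x ij.1 ij.2 != 0%N)%:R : R) =
           (filled K x (Rr x))%:R.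
  rewrite /filled -sum1_count natr_sum [RHS]big_mkcond; apply: eq_bigr => ij _.
  by case: (_ != _).
rewrite -[gap x *+ _]mulr_natl mulrDr mulKf ?gt_eqF // lerD2l mulrC.
by rewrite ler_wpM2r ?invr_ge0 ?ler_nat.
Qed.

Lemma expect_gap_step K t x : consistent K t x -> (0 < t)%N -> (t < K * K)%N ->
  expect (step R K t x) gap <= gap x + t%:R / (K * K - t)%N%:R.
Proof.
move=> xc t_gt0 tKK; have [trK _] := xc.
have /andP[rho_ge0 rho_le1] := row_prob_ge0_le1 trK tKK.
have := old_row_weight_le t_gt0 trK tKK.
rewrite stepE expect_dbind expect_dbern.
have := ler_wpM2l rho_ge0 (expect_gap_new_row K t x).
have := ler_wpM2l (_ : 0 <= 1 - row_prob K t (Rr x)) (expect_gap_old_row xc t_gt0).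
rewrite subr_ge0 => /(_ rho_le1); nra.
Qed.

Lemma lawS K t : (0 < t)%N -> law R K t.+1 = dbind (law R K t) (step R K t).
Proof. by case: t. Qed.

Lemma subdist_law K t : (t <= K * K)%N -> subdist (consistent K t) (law R K t).
Proof.
elim: t => [|[|t] IH] tKK.
- exact/subdist_dret/consistent_state0.
- by apply/subdist_dret/consistent_state1; nia.
- rewrite lawS //; apply: subdist_dbind.
  by apply: sub_subdist (IH (ltnW tKK)) => y yc; apply: subdist_step.
Qed.

Lemma expect_gap_law K t : (t < K * K)%N ->
  expect (law R K t) gap <= t%:R ^+ 2 / (K * K - t)%N%:R.
Proof.
elim: t => [|[|t] IH] tKK.
- by rewrite expect_dret /gap /= subrr normr0 divr_ge0 ?exprn_ge0.
- by rewrite /= expect_dret /gap /= subrr normr0 divr_ge0 ?exprn_ge0.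
have [lawc lawm] := subdist_law (ltnW (ltnW tKK)).
rewrite lawS // expect_dbind.
apply: le_trans
  (ler_expect (h := fun y => gap y + t.+1%:R / (K * K - t.+1)%N%:R) lawc _) _.
  by move=> y yc; apply: expect_gap_step => //; exact: ltnW.
rewrite expectDr.
have d_gt0 : 0 < (K * K - t.+2)%N%:R :> R by rewrite ltr0n subn_gt0.
have d'_gt0 : 0 < (K * K - t.+1)%N%:R :> R by rewrite ltr0n subn_gt0 ltnW.
apply: le_trans (lerD (IH (ltnW tKK)) (ler_piMl _ lawm)) _.
  by rewrite divr_ge0 // ltW.
rewrite -mulrDl; apply: ler_pM.
- by rewrite addr_ge0 // ?exprn_ge0.
- by rewrite invr_ge0 ltW.
- by rewrite -!natr1 expr2; set u := t%:R : R; have : 0 <= u by []; nra.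
- by rewrite lef_pV2 ?posrE // ler_nat; lia.
Qed.

Lemma prob_gap_gt_le K t (eps : R) : 0 < eps -> (t < K * K)%N ->
  prob (law R K t) (fun x => eps * K%:R < gap x)
    <= t%:R ^+ 2 / (K * K - t)%N%:R / (eps * K%:R).
Proof.
move=> eps_gt0 tKK; have [lawc _] := subdist_law (ltnW tKK).
apply: le_trans (prob_lt_le_expect lawc (fun x => normr_ge0 _) _) _.
  by rewrite mulr_gt0 // ltr0n; nia.
by rewrite ler_wpM2r ?invr_ge0 ?mulr_ge0 ?ler0n ?expect_gap_law // ltW.
Qed.

End Construction.

Section Asymptotics.
Variable R : realType.

Lemma powR_nat_ge (g c : R) : 0 < g -> \forall K \near \oo, c <= K%:R `^ g.
Proof.
move=> g_gt0; have [c_le0|c_gt0] := lerP c 0.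
  by apply: nearW => K; apply: le_trans c_le0 (powR_ge0 _ _).
have -> : c = (c `^ g^-1) `^ g by rewrite -powRrM mulVf ?gt_eqF // powRr1 // ltW.
near=> K; apply: ge0_ler_powR; rewrite ?nnegrE ?powR_ge0 ?ler0n //; first exact: ltW.
by near: K; exact: nbhs_infty_ger.
Unshelve. all: by end_near. Qed.

Lemma ler_mul_powR (k x y a b : R) : 0 < k ->
  0 <= x <= k `^ a -> 0 <= y <= k `^ b -> x * y <= k `^ (a + b).
Proof.
move=> k_gt0 /andP[x_ge0 xa] /andP[y_ge0 yb].
by rewrite powRD ?(gt_eqF k_gt0) ?implybT //; exact: ler_pM.
Qed.

Lemma mul2_le_sqr_powR (k T a : R) : 0 < k ->
  0 <= T <= k `^ (1 + a) -> 2 <= k `^ (1 - a) -> T * 2 <= k ^+ 2.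
Proof.
move=> k_gt0 T_le two_le.
have -> : k ^+ 2 = k `^ (1 + a + (1 - a)).
  by rewrite -powR_mulrn ?ltW //; congr (_ `^ _); ring.
by apply: ler_mul_powR => //; rewrite two_le andbT ler0n.
Qed.

Lemma tail_bound_le (k T e eps a : R) : 0 < k -> 0 < e -> 0 < eps ->
  0 <= T <= k `^ (1 + a) -> T * 2 <= k ^+ 2 -> 2 / (e * eps) <= k `^ (1 - 2 * a) ->
  T ^+ 2 / (k * k - T) / (eps * k) <= e.
Proof.
move=> k_gt0 e_gt0 eps_gt0 T_le Tk2 c_le.
have T_ge0 : 0 <= T by case/andP: T_le.
have ee_gt0 : 0 < e * eps by rewrite mulr_gt0.
have c_ge0 : 0 <= 2 / (e * eps) by rewrite divr_ge0 // ltW.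
have Tc_le : T * (2 / (e * eps)) <= k `^ (1 + a + (1 - 2 * a)).
  by apply: ler_mul_powR => //; rewrite c_ge0 c_le.
have T2c_le : T * (T * (2 / (e * eps))) <= k ^+ 3.
  have -> : k ^+ 3 = k `^ (1 + a + (1 + a + (1 - 2 * a))).
    by rewrite -powR_mulrn ?ltW //; congr (_ `^ _); ring.
  by apply: ler_mul_powR => //; rewrite mulr_ge0 // Tc_le.
have T2_le : T ^+ 2 * 2 <= e * eps * k ^+ 3.
  have -> : T ^+ 2 * 2 = e * eps * (T * (T * (2 / (e * eps)))).
    by field; rewrite !gt_eqF.
  by rewrite ler_wpM2l // ltW.
have half : k ^+ 2 / 2 <= k * k - T by rewrite expr2 in Tk2 *; lra.
have d_gt0 : 0 < k * k - T by apply: lt_le_trans half; rewrite divr_gt0 ?exprn_gt0.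
rewrite ler_pdivrMr ?mulr_gt0 // ler_pdivrMr //.
have := ler_wpM2l (ltW (mulr_gt0 ee_gt0 k_gt0)) half.
rewrite !exprS expr0 in T2_le *; nra.
Qed.

End Asymptotics.

Theorem corollary6p4 (R : realType) (alpha : R) (t : nat -> nat) :
  0 < alpha < 2^-1 ->
  (forall K : nat, (2 <= K)%N -> (t K)%:R <= (K%:R : R) `^ (1 + alpha)) ->
  forall eps : R, 0 < eps ->
    (fun K : nat =>
       prob (law R K (t K))
         (fun x => eps * K%:R < `| (Cc x)%:R - (Ct x)%:R |)) @ \oo --> 0.
Proof.
move=> /andP[alpha_gt0 alpha_lt_half] t_le eps eps_gt0.
have alpha2_lt1 : alpha * 2 < 1 by rewrite -ltr_pdivlMr // mul1r.
apply/cvgr0Pnorm_le => e e_gt0.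
have two_le : \forall K \near \oo, (2 : R) <= K%:R `^ (1 - alpha).
  by apply: powR_nat_ge; lra.
have c_le : \forall K \near \oo, 2 / (e * eps) <= K%:R `^ (1 - 2 * alpha).
  by apply: powR_nat_ge; lra.
near=> K.
have K_ge2 : (2 <= K)%N by near: K; exact: nbhs_infty_ge.
have k_gt0 : 0 < K%:R :> R by rewrite ltr0n; lia.
have t_bound : 0 <= ((t K)%:R : R) <= K%:R `^ (1 + alpha) by rewrite ler0n t_le.
have tK2 : (t K)%:R * 2 <= K%:R ^+ 2 :> R.
  by apply: mul2_le_sqr_powR k_gt0 t_bound _; near: K; exact: two_le.
have tKK : (t K < K * K)%N.
  rewrite -(ltr_nat R) natrM; rewrite expr2 in tK2.
  have : 0 < K%:R * K%:R :> R by rewrite mulr_gt0.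
  lra.
have [lawc _] := subdist_law R (ltnW tKK).
rewrite ger0_norm; last exact: prob_ge0 lawc.
apply: le_trans (prob_gap_gt_le eps_gt0 tKK) _.
rewrite natrB ?natrM ?(ltnW tKK) //.
apply: tail_bound_le k_gt0 e_gt0 eps_gt0 t_bound tK2 _.
by near: K; exact: c_le.
Unshelve. all: by end_near. Qed.
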